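(* Let $\mathcal{M}=\langle M,\circ,e\rangle$ be an mge monoid and let $m,n\in M$ be such that the equation $mx=n$ has a solution $x\in M$. Then the solution is unique, and if $\langle x_1,x_2\rangle$ is an mge of $\langle m,n\rangle$ then $x_2$ is invertible and $x=x_1x_2^{-1}$.
   Context: In a monoid $\langle M,\circ,e\rangle$, a tuple $\langle m_1,\dots,m_n\rangle\in M^n$ is equalizable if there is $\langle x_1,\dots,x_n\rangle\in M^n$ (an equalizer) with $m_1x_1=\dots=m_nx_n$; an equalizer is a most general equalizer (mge) if every equalizer has the form $\langle x_1x,\dots,x_nx\rangle$ for some $x\in M$. An mge monoid is a monoid with right cancellation ($ac=bc\Rightarrow a=b$) in which every equalizable pair has an mge. An element $m$ is invertible if $mn=e$ for some $n\in M$; this $n$ is unique and denoted $m^{-1}$. *)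

Definition is_monoid {M : Type} (op : M -> M -> M) (e : M) : Prop :=
  (forall a b c, op (op a b) c = op a (op b c)) /\
  (forall a, op e a = a) /\ (forall a, op a e = a).

Definition right_cancellative {M : Type} (op : M -> M -> M) : Prop :=
  forall a b c, op a c = op b c -> a = b.

Definition is_equalizer2 {M : Type} (op : M -> M -> M) (m1 m2 x1 x2 : M) : Prop :=
  op m1 x1 = op m2 x2.

Definition equalizable2 {M : Type} (op : M -> M -> M) (m1 m2 : M) : Prop :=
  exists x1 x2, is_equalizer2 op m1 m2 x1 x2.

Definition is_mge2 {M : Type} (op : M -> M -> M) (m1 m2 x1 x2 : M) : Prop :=
  is_equalizer2 op m1 m2 x1 x2 /\
  (forall y1 y2, is_equalizer2 op m1 m2 y1 y2 ->
     exists x, y1 = op x1 x /\ y2 = op x2 x).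

Definition mge_monoid {M : Type} (op : M -> M -> M) (e : M) : Prop :=
  is_monoid op e /\ right_cancellative op /\
  (forall m1 m2, equalizable2 op m1 m2 -> exists x1 x2, is_mge2 op m1 m2 x1 x2).

Definition invertible {M : Type} (op : M -> M -> M) (e m : M) : Prop :=
  exists n, op m n = e.

(* Since m x = n, the pair <x, e> equalizes <m, n>, so any mge <x1, x2> factors it:
   x = x1 z and e = x2 z.  In a right-cancellative monoid a right inverse is a
   two-sided inverse, hence unique; so z is determined by x2 alone and x = x1 x2^-1
   for every solution x, which gives uniqueness as well. *)


Section RightCancellativeMonoid.

Variables (M : Type) (op : M -> M -> M) (e : M).
Hypothesis opA : forall a b c, op (op a b) c = op a (op b c).
Hypothesis op1x : forall a, op e a = a.
Hypothesis opx1 : forall a, op a e = a.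
Hypothesis op_cancel : right_cancellative op.

Lemma right_inverse_op_comm (a b : M) : op a b = e -> op b a = e.
Proof.
  intros Hab. apply (op_cancel _ _ b).
  rewrite opA, Hab, opx1, op1x. reflexivity.
Qed.

Lemma right_inverse_unique (a b c : M) : op a b = e -> op a c = e -> c = b.
Proof.
  intros Hab Hac.
  rewrite <- (op1x c), <- (right_inverse_op_comm a b Hab), opA, Hac, opx1.
  reflexivity.
Qed.

Lemma solution_is_equalizer2 (m n x : M) : op m x = n -> is_equalizer2 op m n x e.
Proof. intros Hx. unfold is_equalizer2. rewrite opx1. exact Hx. Qed.

Lemma mge2_factor_solution (m n x x1 x2 : M) :
  is_mge2 op m n x1 x2 -> op m x = n -> exists z, x = op x1 z /\ op x2 z = e.
Proof.
  intros [_ Hgen] Hx.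
  destruct (Hgen x e (solution_is_equalizer2 m n x Hx)) as [z [Hxz He]].
  exists z. split; [exact Hxz | symmetry; exact He].
Qed.

Lemma mge2_solution_eq (m n x x1 x2 y : M) :
  is_mge2 op m n x1 x2 -> op m x = n -> op x2 y = e -> x = op x1 y.
Proof.
  intros Hmge Hx Hy.
  destruct (mge2_factor_solution m n x x1 x2 Hmge Hx) as [z [Hxz Hz]].
  rewrite Hxz, (right_inverse_unique x2 y z Hy Hz). reflexivity.
Qed.

End RightCancellativeMonoid.

Theorem lemma4 (M : Type) (op : M -> M -> M) (e : M)
  (HM : mge_monoid op e) (m n x : M) (hx : op m x = n) :
  (forall x' : M, op m x' = n -> x' = x) /\
  (forall x1 x2 : M, is_mge2 op m n x1 x2 ->
     invertible op e x2 /\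
     (forall y : M, op x2 y = e -> x = op x1 y)).
Proof.
  destruct HM as [[opA [op1x opx1]] [op_cancel has_mge]].
  pose proof (mge2_solution_eq M op e opA op1x opx1 op_cancel m n) as Hsol.
  split.
  - intros x' hx'.
    assert (Heq : equalizable2 op m n)
      by (exists x, e; exact (solution_is_equalizer2 M op e opx1 m n x hx)).
    destruct (has_mge m n Heq) as [x1 [x2 Hmge]].
    destruct (mge2_factor_solution M op e opx1 m n x x1 x2 Hmge hx) as [z [_ Hz]].
    rewrite (Hsol x' x1 x2 z Hmge hx' Hz), (Hsol x x1 x2 z Hmge hx Hz).
    reflexivity.
  - intros x1 x2 Hmge. split.
    + destruct (mge2_factor_solution M op e opx1 m n x x1 x2 Hmge hx) as [z [_ Hz]].
      exists z. exact Hz.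
    + intros y Hy. exact (Hsol x x1 x2 y Hmge hx Hy).
Qed.
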